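(* Assume the setting described in the context, and let $\langle e^m_\alpha:\alpha<\lambda,m<\omega\rangle$ be a generalized $C$-sequence on $\lambda$ such that for all $\alpha<\lambda$ and $m<\omega$: $|e^m_\alpha|\leq\mathrm{cf}(\alpha)+\mu_m^+$, and if $\delta\in S\cap e^m_\alpha$ then $C_\delta[m]\subseteq e^m_\alpha$. Let $\langle t_\alpha:\alpha<\lambda\rangle$ be a pairwise disjoint family of finite subsets of $\lambda$. Then for $\mathrm{id}_p(\bar C,\bar I)$-almost all $\beta^*<\lambda$ (that is, the set of $\beta^*<\lambda$ for which the following fails belongs to $\mathrm{id}_p(\bar C,\bar I)$) there are $\alpha<\beta<\lambda$ and $m<\omega$ such that for every $\zeta\in t_\alpha$ and $\xi\in t_\beta$, the $m$-walk from $\xi$ to $\zeta$ passes through $\beta^*$, i.e. $\beta^*=\beta^m_k(\zeta,\xi)$ for some $k$.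
   Context: Setting: $\mu$ is a singular cardinal with $\mathrm{cf}(\mu)=\aleph_0$, $\lambda=\mu^+$, $\sigma$ is a regular cardinal with $\aleph_0<\sigma<\mu$, $S$ is a stationary subset of $\{\delta<\lambda:\mathrm{cf}(\delta)=\sigma\}$, and $\langle\mu_i:i<\omega\rangle$ is a strictly increasing sequence of regular cardinals cofinal in $\mu$ with $\sigma<\mu_0$. For each $\delta\in S$, $c^0_\delta$ is the increasing enumeration of a closed unbounded subset of $\delta$ of order type $\sigma$, and for every club $E\subseteq\lambda$ the set of $\delta\in S$ with $\mathrm{ran}(c^0_\delta)\subseteq E$ is stationary. For $\delta\in S$, $\epsilon<\sigma$, $m<\omega$, $I(\delta,\epsilon,m)$ is the half-open interval $(c^0_\delta(\omega\cdot\epsilon+m),c^0_\delta(\omega\cdot\epsilon+m+1)]$. $\bar C=\langle C_\delta:\delta\in S\rangle$ satisfies: $C_\delta$ is closed unbounded in $\delta$; $\mathrm{ran}(c^0_\delta)\subseteq C_\delta$; $|C_\delta\cap I(\delta,\epsilon,m)|\leq\mu_m^+$; every $\alpha\in\mathrm{nacc}(C_\delta)\cap I(\delta,\epsilon,m)$ has $\mathrm{cf}(\alpha)>\mu_m^+$; for every club $E\subseteq\lambda$ there are stationarily many $\delta\in S$ such that $E\cap\mathrm{nacc}(C_\delta)\cap I(\delta,\epsilon,m)\neq\emptyset$ for all $\epsilon<\sigma$, $m<\omega$. Here for $C$ club in $\delta$, $\mathrm{acc}(C)=\{\alpha<\delta:\alpha=\sup(\alpha\cap C)\}$, $\mathrm{nacc}(C)=C\setminus\mathrm{acc}(C)$.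 For $\delta\in S$, $I_\delta$ is the ideal on $C_\delta$ generated by the sets $\{\gamma\in C_\delta:\gamma\in\mathrm{acc}(C_\delta)\text{ or }\mathrm{cf}(\gamma)<\alpha\text{ or }\gamma<\beta\}$ for $\alpha<\mu$, $\beta<\delta$; $\mathrm{id}_p(\bar C,\bar I)$ is the ideal of all $A\subseteq\lambda$ for which there is a club $E\subseteq\lambda$ with $A\cap E\cap C_\delta\in I_\delta$ for all $\delta\in S\cap E$. $C_\delta[m]=\mathrm{ran}(c^0_\delta)\cup\bigcup\{C_\delta\cap I(\delta,\epsilon,i):\epsilon<\sigma, i\leq m\}$. A generalized $C$-sequence on $\lambda$ is a family $\langle e^m_\alpha:\alpha<\lambda,m<\omega\rangle$ with each $e^m_\alpha$ closed unbounded in $\alpha$ and $e^m_\alpha\subseteq e^{m+1}_\alpha$. Walks: for $\alpha<\beta<\lambda$ and $m<\omega$, $\beta^m_0(\alpha,\beta)=\beta$ and $\beta^m_{i+1}(\alpha,\beta)=\min(e^m_{\beta^m_i(\alpha,\beta)}\setminus\alpha)$ if $\beta^m_i(\alpha,\beta)>\alpha$, and $=\alpha$ otherwise; $\rho^m_2(\alpha,\beta)$ is the least $i$ with $\beta^m_i(\alpha,\beta)=\alpha$; the $m$-walk from $\beta$ to $\alpha$ is $\langle\beta^m_i(\alpha,\beta):i\leq\rho^m_2(\alpha,\beta)\rangle$. *)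

(* The cardinal lambda = mu^+ is modelled as a type L carrying a
   strict well-order lt; ordinals < lambda are the elements of L, an ordinal a
   is identified with its initial segment (seg a), and cardinalities of subsets
   of L are compared via injections. *)
From Stdlib Require Import List.
Set Implicit Arguments.
Unset Strict Implicit.

Section WO.
Variable L : Type.
Variable lt : L -> L -> Prop.

Definition le (x y : L) : Prop := lt x y \/ x = y.

Definition wellorder : Prop :=
  (forall x, ~ lt x x) /\
  (forall x y z, lt x y -> lt y z -> lt x z) /\
  (forall x y, lt x y \/ x = y \/ lt y x) /\
  well_founded lt.

Definition seg (a : L) : L -> Prop := fun x => lt x a.

Definition le_card (A B : L -> Prop) : Prop :=
  exists f : L -> L, (forall x, A x -> B (f x)) /\
    (forall x y, A x -> A y -> f x = f y -> x = y).

(* |A| <= k + n  (cardinal sum, realised as a disjoint union of seg k and seg n) *)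
Definition le_card_sum (A : L -> Prop) (k n : L) : Prop :=
  exists f : L -> L + L,
    (forall x, A x -> match f x with inl y => lt y k | inr y => lt y n end) /\
    (forall x y, A x -> A y -> f x = f y -> x = y).

Definition is_card (k : L) : Prop :=
  forall b, lt b k -> ~ le_card (seg k) (seg b).

Definition cofinal_in (X : L -> Prop) (a : L) : Prop :=
  forall x, lt x a -> exists y, X y /\ le x y.

Definition has_cof_le (a k : L) : Prop :=
  exists X : L -> Prop, (forall x, X x -> lt x a) /\ cofinal_in X a /\ le_card X (seg k).

Definition cof (a k : L) : Prop :=
  has_cof_le a k /\ forall k', lt k' k -> ~ has_cof_le a k'.

Definition regular (k : L) : Prop := is_card k /\ cof k k.

Definition succ_card (n k : L) : Prop :=
  ~ le_card (seg k) (seg n) /\ forall b, lt b k -> le_card (seg b) (seg n).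

Definition is_zero (a : L) : Prop := forall x, ~ lt x a.

Definition is_limit (a : L) : Prop :=
  (exists x, lt x a) /\ forall x, lt x a -> exists y, lt x y /\ lt y a.

Definition is_omega (w : L) : Prop :=
  is_limit w /\ forall x, lt x w -> ~ is_limit x.

Definition immsucc (a b : L) : Prop := lt a b /\ forall x, lt a x -> ~ lt x b.

Inductive plus_nat (g : L) : nat -> L -> Prop :=
| pn0 : plus_nat g 0 g
| pnS : forall m x y, plus_nat g m x -> immsucc x y -> plus_nat g (S m) y.

Definition acc_in (C : L -> Prop) (a : L) : Prop :=
  forall x, lt x a -> exists y, C y /\ lt x y /\ lt y a.

Definition nacc_in (C : L -> Prop) (a : L) : Prop := C a /\ ~ acc_in C a.

Definition club_in (C : L -> Prop) (d : L) : Prop :=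
  (forall x, C x -> lt x d) /\ cofinal_in C d /\
  (forall a, lt a d -> (exists y, C y /\ lt y a) -> acc_in C a -> C a).

Definition club (E : L -> Prop) : Prop :=
  (forall x, exists y, E y /\ lt x y) /\
  (forall a, (exists y, E y /\ lt y a) -> acc_in E a -> E a).

Definition stationary (S : L -> Prop) : Prop :=
  forall E, club E -> exists d, S d /\ E d.

Definition ran_below (f : L -> L) (s : L) : L -> Prop :=
  fun x => exists i, lt i s /\ f i = x.

Definition strict_incr_below (f : L -> L) (s : L) : Prop :=
  forall i j, lt i j -> lt j s -> lt (f i) (f j).

(* g = omega * epsilon for some epsilon < sigma, i.e. g < sigma is 0 or a limit *)
Definition index_base (s g : L) : Prop := lt g s /\ (is_zero g \/ is_limit g).

(* I(delta, epsilon, m) with c = c^0_delta and g = omega*epsilon :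
   the half-open interval (c(g+m), c(g+m+1)] *)
Definition interval (c : L -> L) (g : L) (m : nat) (x : L) : Prop :=
  exists a b, plus_nat g m a /\ plus_nat g (S m) b /\ lt (c a) x /\ le x (c b).

Definition Cm (c : L -> L) (s : L) (C : L -> Prop) (m : nat) (x : L) : Prop :=
  ran_below c s x \/
  (C x /\ exists g i, index_base s g /\ i <= m /\ interval c g i x).

Definition gen_set (C : L -> Prop) (cf : L -> L) (a b x : L) : Prop :=
  C x /\ (acc_in C x \/ lt (cf x) a \/ lt x b).

Definition in_I (mu : L) (C : L -> Prop) (cf : L -> L) (d : L) (A : L -> Prop) : Prop :=
  (forall x, A x -> C x) /\
  exists l : list (L * L),
    Forall (fun p => lt (fst p) mu /\ lt (snd p) d) l /\
    forall x, A x -> exists p, In p l /\ gen_set C cf (fst p) (snd p) x.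

Definition in_idp (S : L -> Prop) (mu : L) (C : L -> L -> Prop) (cf : L -> L)
  (A : L -> Prop) : Prop :=
  exists E, club E /\
    forall d, S d -> E d -> in_I mu (C d) cf d (fun x => A x /\ E x /\ C d x).

Definition is_min (P : L -> Prop) (y : L) : Prop := P y /\ forall z, P z -> le y z.

(* walkpt e a b k x : beta_k(a, b) = x for the walk along e (e x = e_x) *)
Inductive walkpt (e : L -> L -> Prop) (a b : L) : nat -> L -> Prop :=
| wp0 : walkpt e a b 0 b
| wpS : forall k x y, walkpt e a b k x -> lt a x ->
          is_min (fun z => e x z /\ le a z) y -> walkpt e a b (S k) y
| wpE : forall k x, walkpt e a b k x -> ~ lt a x -> walkpt e a b (S k) a.

Definition finite_set (A : L -> Prop) : Prop :=
  exists l : list L, forall x, A x <-> In x l.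

End WO.

From Stdlib Require Import List Classical ClassicalEpsilon Lia Arith.

(* Fix [d] in [S] closed under [alpha |-> t alpha] (a club condition) and [beta > d] with
   [t beta] above [d].  For [xi] in [t beta], the [m]-walk from [xi] towards [d] halts, for
   all large [m], at one point [xx] with [d] in [e m xx]; the sets [e] met before halting
   have gaps below [d], and since [cf d = sigma > omega] all these countably many gaps lie
   below one [b < d].  Now let [x] be a non-accumulation point of [C d] of large cofinality
   above [b], in the interval [I(d, eps, n)].  Coherence puts [x] into [e m xx] for
   [m >= n], and [|e m xx| < cf x] leaves a gap of [e m xx] below [x].  Taking [alpha] with
   [t alpha] above all these gaps and below [x], each walk from a point of [t beta] to a
   point of [t alpha] follows the walk towards [d] up to [xx] and then steps to [x].  So
   the exceptional points of [C d] are accumulation points, of small cofinality, or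
   bounded below [d]: a set in [I_d]. *)

Section Walks.

(** * Well-orders *)

Variable L : Type.
Variable lt : L -> L -> Prop.
Hypothesis Hwo : wellorder lt.

Local Notation le := (le lt).

Lemma lt_irrefl x : ~ lt x x.
Proof. destruct Hwo as [H _]; auto. Qed.

Lemma lt_trans x y z : lt x y -> lt y z -> lt x z.
Proof. destruct Hwo as [_ [H _]]; eauto. Qed.

Lemma lt_total x y : lt x y \/ x = y \/ lt y x.
Proof. destruct Hwo as [_ [_ [H _]]]; auto. Qed.

Lemma lt_well_founded : well_founded lt.
Proof. destruct Hwo as [_ [_ [_ H]]]; auto. Qed.

Lemma le_refl x : le x x.
Proof. now right. Qed.

Lemma lt_le_incl x y : lt x y -> le x y.
Proof. now left. Qed.

Local Hint Resolve lt_irrefl lt_trans le_refl lt_le_incl : core.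

Lemma lt_asym x y : lt x y -> lt y x -> False.
Proof. intros; apply (lt_irrefl x); eauto. Qed.

Lemma le_trans x y z : le x y -> le y z -> le x z.
Proof. intros [H|<-] [H'|<-]; eauto. Qed.

Lemma lt_le_trans x y z : lt x y -> le y z -> lt x z.
Proof. intros H [H'|<-]; eauto. Qed.

Lemma le_lt_trans x y z : le x y -> lt y z -> lt x z.
Proof. intros [H|<-] H'; eauto. Qed.

Local Hint Resolve lt_le_trans le_lt_trans : core.

Lemma le_lt_contra x y : le x y -> lt y x -> False.
Proof. intros [H|<-] H'; eauto using lt_asym. Qed.

Lemma not_lt_le x y : ~ lt x y -> le y x.
Proof. intros H. destruct (lt_total x y) as [h|[<-|h]]; auto; tauto. Qed.

Lemma not_le_lt x y : ~ le x y -> lt y x.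
Proof. intros H. destruct (lt_total x y) as [h|[<-|h]]; auto; exfalso; auto. Qed.

Lemma le_antisym x y : le x y -> le y x -> x = y.
Proof. intros [H|H] H'; auto. exfalso; eauto using le_lt_contra. Qed.

Lemma least_exists (P : L -> Prop) : (exists x, P x) -> exists y, is_min lt P y.
Proof.
  intros [x Hx]. apply NNPP; intro Hn.
  enough (Hnone : forall z, ~ P z) by exact (Hnone x Hx).
  intro z. induction z as [z IH] using (well_founded_ind lt_well_founded).
  intro Pz. apply Hn. exists z. split; auto.
  intros u Pu. apply not_lt_le. intro h. exact (IH u h Pu).
Qed.

Lemma max_exists x y : exists z, le x z /\ le y z /\ (z = x \/ z = y).
Proof. destruct (lt_total x y) as [h|[<-|h]]; eauto 6. Qed.

Lemma sup_exists (P : L -> Prop) b : (forall x, P x -> le x b) ->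
  exists s, (forall x, P x -> le x s) /\ (forall y, lt y s -> exists x, P x /\ lt y x).
Proof.
  intros Hb. destruct (least_exists (fun s => forall x, P x -> le x s)) as [s [Hub Hleast]]; eauto.
  exists s; split; auto. intros y Hy. apply NNPP; intro Hn.
  apply (le_lt_contra s y); auto. apply Hleast. intros x Px.
  apply not_lt_le. intro h. apply Hn; eauto.
Qed.

Lemma bound_below_limit d (l : list L) : is_limit lt d -> (forall x, In x l -> lt x d) ->
  exists b, lt b d /\ forall x, In x l -> lt x b.
Proof.
  intros [[x0 hx0] Hd]. induction l as [|a l IH]; intro H.
  - exists x0; split; auto. intros y [].
  - destruct IH as [b [hb1 hb2]]. { intros; apply H; right; auto. }
    destruct (max_exists a b) as [z [h1 [h2 h3]]].
    assert (hz : lt z d) by (destruct h3 as [->| ->]; auto; apply H; left; auto).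
    destruct (Hd z hz) as [y [y1 y2]]. exists y; split; auto.
    intros x [<-|hx]; eauto.
Qed.

Definition zero_or_limit (g : L) : Prop := is_zero lt g \/ is_limit lt g.

Lemma immsucc_unique x y y' : immsucc lt x y -> immsucc lt x y' -> y = y'.
Proof.
  intros [h1 h2] [h1' h2']. destruct (lt_total y y') as [h|[h|h]]; auto; exfalso.
  - exact (h2' y h1 h).
  - exact (h2 y' h1' h).
Qed.

Lemma immsucc_pred_unique x x' y : immsucc lt x y -> immsucc lt x' y -> x = x'.
Proof.
  intros [h1 h2] [h1' h2']. destruct (lt_total x x') as [h|[h|h]]; auto; exfalso.
  - exact (h2 x' h h1').
  - exact (h2' x h h1).
Qed.

Lemma immsucc_exists x z : lt x z -> exists y, immsucc lt x y /\ le y z.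
Proof.
  intros h. destruct (least_exists (lt x)) as [y [H1 H2]]; eauto.
  exists y; repeat split; auto. intros u h1 h2. exact (le_lt_contra _ _ (H2 u h1) h2).
Qed.

Lemma immsucc_not_zero_or_limit x y : immsucc lt x y -> ~ zero_or_limit y.
Proof.
  intros [h1 h2] [Hz|[_ Hl]].
  - exact (Hz x h1).
  - destruct (Hl x h1) as [u [hu1 hu2]]. exact (h2 u hu1 hu2).
Qed.

Lemma not_zero_or_limit_immsucc y : ~ zero_or_limit y -> exists x, immsucc lt x y.
Proof.
  intros H. apply NNPP; intro Hn. apply H. right. split.
  - apply NNPP; intro h. apply H. left. intros x hx. eauto.
  - intros x hx. apply NNPP; intro h. apply Hn. exists x. split; auto.
    intros u h1 h2. eauto.
Qed.

Lemma plus_nat_ge g n y : plus_nat lt g n y -> le g y.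
Proof. induction 1 as [|n x y _ IH [hxy _]]; eauto using le_trans. Qed.

Lemma plus_nat_functional g n y y' : plus_nat lt g n y -> plus_nat lt g n y' -> y = y'.
Proof.
  intros H; revert y'; induction H as [|n x y Hx IH Hxy]; intros y' H'; inversion H'; subst; auto.
  match goal with Hx' : plus_nat lt g n ?x' |- _ => rewrite <- (IH _ Hx') in * end.
  eauto using immsucc_unique.
Qed.

Lemma plus_nat_injective g g' n n' y : zero_or_limit g -> zero_or_limit g' ->
  plus_nat lt g n y -> plus_nat lt g' n' y -> g = g' /\ n = n'.
Proof.
  intros Hg Hg' H; revert n' Hg'; induction H as [|n x y Hx IH Hxy]; intros n' Hg' H'.
  - inversion H'; subst; auto. exfalso; eapply immsucc_not_zero_or_limit; eauto.
  - inversion H' as [|n0 x0 y0 Hx0 Hxy0]; subst.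
    + exfalso; eapply immsucc_not_zero_or_limit; eauto.
    + rewrite <- (immsucc_pred_unique _ _ _ Hxy Hxy0) in Hx0.
      destruct (IH n0 Hg' Hx0); subst; auto.
Qed.

Lemma plus_nat_decompose y : exists g n, zero_or_limit g /\ plus_nat lt g n y.
Proof.
  induction y as [y IH] using (well_founded_ind lt_well_founded).
  destruct (classic (zero_or_limit y)) as [h|h].
  - exists y, 0; split; auto; constructor.
  - destruct (not_zero_or_limit_immsucc _ h) as [x hx].
    destruct (IH x (proj1 hx)) as [g [n [H1 H2]]].
    exists g, (S n); split; auto. econstructor; eauto.
Qed.

Lemma plus_nat_below_limit g n a : is_limit lt a -> lt g a ->
  exists z, plus_nat lt g n z /\ lt z a.
Proof.
  intros Hl hg. induction n as [|n [z [h1 h2]]].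
  - exists g; split; auto; constructor.
  - destruct (proj2 Hl z h2) as [u [u1 u2]].
    destruct (immsucc_exists _ _ u1) as [v [v1 v2]].
    exists v; split; eauto. econstructor; eauto.
Qed.

Lemma cof_limit a k x k' : cof lt a k -> lt x k' -> lt k' k -> is_limit lt a.
Proof.
  intros [_ Hmin] hx hk. split.
  - apply NNPP; intro hn. apply (Hmin k' hk). exists (fun _ => False). repeat split; try tauto.
    + intros y hy; exfalso; eauto.
    + exists (fun y => y); split; intros; tauto.
  - intros z hz. apply NNPP; intro hn. apply (Hmin k' hk). exists (fun y => y = z). repeat split.
    + intros ? ->; auto.
    + intros y hy. exists z; split; auto. apply not_lt_le. intro h. eauto.
    + exists (fun _ => x). split; [intros; exact hx | intros ? ? -> ->; auto].
Qed.

Lemma least_nat (P : nat -> Prop) n : P n ->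
  exists n0, P n0 /\ n0 <= n /\ forall j, j < n0 -> ~ P j.
Proof.
  induction n as [n IH] using (well_founded_ind Wf_nat.lt_wf). intro hn.
  destruct (classic (exists j, j < n /\ P j)) as [[j [hj1 hj2]]|hno].
  - destruct (IH j hj1 hj2) as [n0 [h0 [h1 h2]]]. exists n0; repeat split; auto; lia.
  - exists n; repeat split; auto. intros j hj hp; apply hno; eauto.
Qed.

Lemma eventually_forall_list {A : Type} (P : A -> nat -> Prop) (l : list A) :
  (forall a N N', P a N -> N <= N' -> P a N') ->
  (forall a, In a l -> exists N, P a N) -> exists N, forall a, In a l -> P a N.
Proof.
  intros Hup. induction l as [|a l IH]; intro H.
  - exists 0; intros _ [].
  - destruct IH as [N1 h1]. { intros; apply H; right; auto. }
    destruct (H a (or_introl eq_refl)) as [N2 h2]. exists (max N1 N2).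
    intros a' [<-|ha]; [apply (Hup _ N2) | apply (Hup _ N1)]; auto; lia.
Qed.

Lemma increasing_seq_le (x : nat -> L) : (forall n, lt (x n) (x (S n))) ->
  forall i j, i <= j -> le (x i) (x j).
Proof. intros Hx i j hij. induction hij; eauto using le_trans. Qed.

(** * The cardinals [omega < sigma < mu < lambda] *)

Variable w : L.
Hypothesis Hw : is_omega lt w.

Lemma omega_limit : is_limit lt w.
Proof. apply Hw. Qed.

Lemma cof_ge_omega_limit a k : cof lt a k -> le w k -> is_limit lt a.
Proof.
  intros H hk. destruct omega_limit as [[x0 h0] Hl]. destruct (Hl x0 h0) as [x1 [h1 h2]].
  exact (cof_limit _ _ _ _ H h1 (lt_le_trans _ _ _ h2 hk)).
Qed.

Lemma nat_embeds_below_omega : exists nw : nat -> L,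
  (forall n, lt (nw n) w) /\ (forall n n', nw n = nw n' -> n = n').
Proof.
  destruct (least_exists (fun _ => True)) as [z0 [_ hz0]]. { exists w; auto. }
  assert (hb : zero_or_limit z0) by (left; intros x hx; exact (le_lt_contra _ _ (hz0 x I) hx)).
  assert (hzw : lt z0 w) by (destruct omega_limit as [[x0 h0] _]; eauto).
  destruct (choice (fun n z => plus_nat lt z0 n z /\ lt z w)) as [nw Hnw].
  { intro n. exact (plus_nat_below_limit _ n _ omega_limit hzw). }
  exists nw; split; [intro n; apply Hnw|]. intros n n' he.
  destruct (Hnw n) as [h1 _]. destruct (Hnw n') as [h2 _]. rewrite he in h1.
  exact (proj2 (plus_nat_injective _ _ _ _ _ hb hb h1 h2)).
Qed.

Lemma countable_bounded_below d k (h : nat -> L) : cof lt d k -> lt w k ->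
  (forall n, lt (h n) d) -> exists b, lt b d /\ forall n, lt (h n) b.
Proof.
  intros Hd hwk Hh. apply NNPP; intro hn.
  assert (Hcof : forall b, lt b d -> exists n, le b (h n)).
  { intros b hb. apply NNPP; intro h2. apply hn. exists b. split; auto.
    intro n. apply not_le_lt. intro h3. apply h2; eauto. }
  destruct nat_embeds_below_omega as [nw [nw1 nw2]].
  set (X := fun y => exists n, h n = y).
  destruct (choice (fun y n => X y -> h n = y)) as [idx Hidx].
  { intro y. destruct (classic (X y)) as [[n hn']|hx]; [exists n | exists 0]; tauto. }
  apply (proj2 Hd w hwk). exists X. repeat split.
  - intros y [n <-]; auto.
  - intros z hz. destruct (Hcof z hz) as [n hn']. exists (h n). split; auto. exists n; auto.
  - exists (fun y => nw (idx y)). split; [intros; apply nw1|].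
    intros y y' hy hy' he. rewrite <- (Hidx y hy), <- (Hidx y' hy'), (nw2 _ _ he). auto.
Qed.

Variable mu : L.
Hypothesis Hmu_cf : cof lt mu w.
Hypothesis Hlam1 : forall a, le_card (seg lt a) (seg lt mu).
Hypothesis Hlam2 : ~ le_card (fun _ => True) (seg lt mu).

Lemma mu_limit : is_limit lt mu.
Proof. exact (cof_ge_omega_limit _ _ Hmu_cf (le_refl w)). Qed.

Definition unsum (u : L + L) : L := match u with inl y | inr y => y end.

Definition sum_tag (u : L + L) : nat := match u with inl _ => 0 | inr _ => 1 end.

(* [g + n] in the left summand goes to [g + 2n], in the right one to [g + 2n + 1]. *)
Lemma double_mu_embeds : exists F : L + L -> L,
  (forall u, lt (unsum u) mu -> lt (F u) mu) /\
  (forall u v, lt (unsum u) mu -> lt (unsum v) mu -> F u = F v -> u = v).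
Proof.
  destruct (choice (fun u z => lt (unsum u) mu -> exists g n, zero_or_limit g /\
      plus_nat lt g n (unsum u) /\ plus_nat lt g (2 * n + sum_tag u) z /\ lt z mu)) as [F HF].
  { intro u. destruct (classic (lt (unsum u) mu)) as [hc|hc]; [|exists mu; tauto].
    destruct (plus_nat_decompose (unsum u)) as [g [n [hb hp]]].
    assert (hg : lt g mu) by exact (le_lt_trans _ _ _ (plus_nat_ge _ _ _ hp) hc).
    destruct (plus_nat_below_limit g (2 * n + sum_tag u) mu mu_limit hg) as [z hz].
    exists z; intros _; exists g, n; tauto. }
  exists F; split.
  - intros u hu. destruct (HF u hu) as [g [n [_ [_ [_ h]]]]]; auto.
  - intros u v hu hv he. destruct (HF u hu) as [g [n [hb [hp [hq _]]]]].
    destruct (HF v hv) as [g' [n' [hb' [hp' [hq' _]]]]]. rewrite he in hq.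
    destruct (plus_nat_injective _ _ _ _ _ hb hb' hq hq') as [<- e2].
    assert (n = n' /\ sum_tag u = sum_tag v) as [<- e4] by (destruct u, v; simpl in *; lia).
    pose proof (plus_nat_functional _ _ _ _ hp hp').
    destruct u, v; simpl in *; congruence.
Qed.

Lemma no_injection_into_double r : ~ exists f : L -> L + L,
  (forall x, lt (unsum (f x)) r) /\ (forall x y, f x = f y -> x = y).
Proof.
  intros [f [H1 H2]]. destruct (Hlam1 r) as [h [h1 h2]].
  destruct double_mu_embeds as [F [F1 F2]].
  set (hf := fun x => match f x with inl y => inl (h y) | inr y => inr (h y) end).
  assert (Hc : forall x, lt (unsum (hf x)) mu).
  { intro x. specialize (H1 x). unfold hf; destruct (f x); apply h1; auto. }
  apply Hlam2. exists (fun x => F (hf x)). split; [intros; apply F1; auto|].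
  intros x y _ _ he. apply F2 in he; auto. apply H2.
  pose proof (H1 x) as q1; pose proof (H1 y) as q2. unfold hf in he.
  destruct (f x), (f y); simpl in *; inversion he; f_equal; apply h2; auto.
Qed.

Lemma unbounded x : exists y, lt x y.
Proof.
  apply NNPP; intro hn.
  assert (Hall : forall y, le y x) by (intro y; apply not_lt_le; intro h; eauto).
  destruct mu_limit as [[x0 h0] _].
  assert (hx0 : lt x0 x) by eauto.
  apply (no_injection_into_double x).
  exists (fun y => if excluded_middle_informative (y = x) then inr x0 else inl y). split.
  - intro y. destruct (excluded_middle_informative (y = x)); simpl; auto.
    destruct (Hall y); tauto.
  - intros y z. destruct (excluded_middle_informative (y = x)),
      (excluded_middle_informative (z = x)); intro he; inversion he; subst; auto.
Qed.

(* [cf x <= mu] as [|x| <= mu]; and [cf x = mu] is impossible since [cf mu = omega]. *)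
Lemma cof_lt_mu x k : cof lt x k -> lt w mu -> lt k mu.
Proof.
  intros Hk hwmu.
  assert (Hx : has_cof_le lt x mu).
  { exists (seg lt x). repeat split; auto. intros y hy; exists y; split; auto. }
  destruct (lt_total k mu) as [h|[->|h]]; auto; exfalso; [|exact (proj2 Hk mu h Hx)].
  destruct Hk as [[X [X1 [X2 [f [f1 f2]]]]] Hmin].
  destruct Hmu_cf as [[Y [Y1 [Y2 [gY [g1 g2]]]]] _].
  assert (Hb : forall y, exists b, Y y -> lt b x /\ forall z, X z -> lt (f z) y -> lt z b).
  { intro y. destruct (classic (Y y)) as [hy|hy]; [|exists x; tauto].
    apply NNPP; intro hn. apply (Hmin y (Y1 y hy)). exists (fun z => X z /\ lt (f z) y).
    repeat split.
    - intros z [hz _]; auto.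
    - intros x' hx'. apply NNPP; intro h2. apply hn. exists x'. intros _. split; auto.
      intros z hz hfz. apply not_le_lt. intro h3. apply h2. exists z; auto.
    - exists f. split; [intros z [_ hz]; auto | intros z z' [hz _] [hz' _]; auto]. }
  destruct (choice _ Hb) as [bf Hbf].
  set (B := fun b => exists y, Y y /\ bf y = b).
  destruct (choice (fun b y => B b -> Y y /\ bf y = b)) as [iy Hiy].
  { intro b. destruct (classic (B b)) as [[y hy]|hb]; [exists y | exists b]; tauto. }
  apply (Hmin w hwmu). exists B. repeat split.
  - intros b [y [hy <-]]. apply (Hbf y hy).
  - intros z hz. destruct (X2 z hz) as [z' [hz'1 hz'2]].
    destruct (proj2 mu_limit (f z') (f1 z' hz'1)) as [u [u1 u2]].
    destruct (Y2 u u2) as [y [hy1 hy2]].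
    exists (bf y). split; [exists y; auto|].
    apply (le_trans _ z'); auto. apply lt_le_incl, (Hbf y hy1); eauto.
  - exists (fun b => gY (iy b)). split; [intros b hb; apply g1, (Hiy b hb)|].
    intros b b' hb hb' he. apply g2 in he; try apply (Hiy _ hb); try apply (Hiy _ hb').
    destruct (Hiy b hb) as [_ e1]. destruct (Hiy b' hb') as [_ e2]. congruence.
Qed.

Variable sigma : L.
Hypothesis Hsig_w : lt w sigma.
Hypothesis Hsig_mu : lt sigma mu.
Variable SS : L -> Prop.
Hypothesis HS_stat : stationary lt SS.
Hypothesis HS_cf : forall d, SS d -> cof lt d sigma.

Lemma omega_lt_mu : lt w mu.
Proof. eauto. Qed.

Lemma stationary_limit d : SS d -> is_limit lt d.
Proof. intros hd. exact (cof_ge_omega_limit _ _ (HS_cf d hd) (lt_le_incl _ _ Hsig_w)). Qed.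

(* Otherwise a strictly increasing sequence of successors above [h] has a club range,
   which [SS] would have to meet in a successor. *)
Lemma omega_seq_bounded (h : nat -> L) : exists y, forall n, lt (h n) y.
Proof.
  destruct (choice (fun (p : L * L) z =>
      lt (fst p) z /\ lt (snd p) z /\ exists q, immsucc lt q z)) as [up Hup].
  { intros [a b]. destruct (max_exists a b) as [m [h1 [h2 _]]].
    destruct (unbounded m) as [v hv]. destruct (immsucc_exists _ _ hv) as [z [hz _]].
    exists z. pose proof (proj1 hz). simpl; eauto 7. }
  set (x := nat_rect (fun _ => L) (up (h 0, h 0)) (fun n xn => up (xn, h (S n)))).
  assert (Hhx : forall n, lt (h n) (x n)).
  { intros [|n]; [exact (proj1 (Hup (h 0, h 0))) | exact (proj1 (proj2 (Hup (x n, h (S n)))))]. }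
  assert (Hxx : forall n, lt (x n) (x (S n))) by (intro n; exact (proj1 (Hup (x n, h (S n))))).
  assert (Hsucc : forall n, exists q, immsucc lt q (x n)).
  { intros [|n]; exact (proj2 (proj2 (Hup _))). }
  pose proof (increasing_seq_le x Hxx) as Hmono.
  apply NNPP; intro hn.
  assert (Hcof : forall y, exists n, le y (h n)).
  { intro y. apply NNPP; intro h2. apply hn. exists y. intro n.
    apply not_le_lt. intro h3. apply h2; eauto. }
  set (E := fun y => exists n, y = x n).
  assert (HE : club lt E).
  { split.
    - intro z. destruct (Hcof z) as [n hz]. exists (x n). split; [exists n|]; eauto.
    - intros a [y [[j0 ->] hj0]] hacc. exfalso. destruct (Hcof a) as [n hna].
      destruct (least_nat (fun j => ~ lt (x j) a) n) as [k [hk1 [_ hk2]]].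
      { intro h'. apply (lt_asym (x n) a); eauto. }
      destruct k as [|k].
      + apply hk1. apply (le_lt_trans _ (x j0)); auto. apply Hmono; lia.
      + assert (hk : lt (x k) a) by (apply NNPP; apply hk2; lia).
        destruct (hacc _ hk) as [y [[j ->] [hj1 hj2]]].
        destruct (le_lt_dec j k) as [hjk|hjk].
        * exact (le_lt_contra _ _ (Hmono _ _ hjk) hj1).
        * apply hk1. exact (le_lt_trans _ _ _ (Hmono _ _ hjk) hj2). }
  destruct (HS_stat E HE) as [d [hd [n ->]]]. destruct (Hsucc n) as [q hq].
  apply (immsucc_not_zero_or_limit _ _ hq). right. apply stationary_limit; auto.
Qed.

Definition empty_between (A : L -> Prop) (s y : L) : Prop :=
  forall z, A z -> lt s z -> lt z y -> False.

Lemma countable2_bounded_below d k (h : nat -> nat -> L) : cof lt d k -> lt w k ->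
  (forall m n, lt (h m n) d) -> exists b, lt b d /\ forall m n, lt (h m n) b.
Proof.
  intros Hd hwk Hh.
  destruct (choice (fun m b => lt b d /\ forall n, lt (h m n) b)) as [bm Hbm].
  { intro m. exact (countable_bounded_below _ _ (h m) Hd hwk (Hh m)). }
  destruct (countable_bounded_below _ _ bm Hd hwk (fun m => proj1 (Hbm m))) as [b [hb1 hb2]].
  exists b; split; auto. intros m n. apply (lt_trans _ (bm m)); auto. apply Hbm.
Qed.

Lemma club_gap A x d : club_in lt A x -> is_limit lt d -> lt d x -> ~ A d ->
  exists s, lt s d /\ empty_between A s d.
Proof.
  intros [_ [_ Hclosed]] [[s0 hs0] Hd] hdx hn. apply NNPP; intro h. apply hn, Hclosed; auto.
  - apply NNPP; intro h2. apply h. exists s0; split; auto.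
    intros z hz1 hz2 hz3. apply h2; eauto.
  - intros s hs. apply NNPP; intro h2. apply h. exists s; split; auto.
    intros z hz1 hz2 hz3. apply h2; eauto.
Qed.

(* Each of the two parts of [A] has fewer than [cf b] points, so neither is cofinal in [b]. *)
Lemma small_set_gap A k n b kb : le_card_sum lt A k n -> cof lt b kb -> lt k kb -> lt n kb ->
  exists s, lt s b /\ empty_between A s b.
Proof.
  intros [f [f1 f2]] Hb hk hn. apply NNPP; intro hno.
  assert (Hc : forall s, lt s b -> exists z, A z /\ lt s z /\ lt z b).
  { intros s hs. apply NNPP; intro h3. apply hno. exists s; split; auto.
    intros z ? ? ?; apply h3; eauto. }
  assert (Hpart : forall (X : L -> Prop) r, (forall z, X z -> A z /\ lt z b) ->
      (forall z, X z -> lt (unsum (f z)) r) ->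
      (forall z z', X z -> X z' -> unsum (f z) = unsum (f z') -> f z = f z') ->
      lt r kb -> ~ cofinal_in lt X b).
  { intros X r hX1 hX2 hX3 hr hcof. apply (proj2 Hb r hr). exists X. repeat split; auto.
    - intros z hz; apply hX1; auto.
    - exists (fun z => unsum (f z)). split; auto.
      intros z z' hz hz' he. apply f2; try apply hX1; auto. }
  set (X1 := fun z => A z /\ lt z b /\ exists y, f z = inl y).
  set (X2 := fun z => A z /\ lt z b /\ exists y, f z = inr y).
  assert (hc1 : ~ cofinal_in lt X1 b).
  { apply (Hpart X1 k); auto.
    - intros z [? [? _]]; auto.
    - intros z [hz [_ [y hy]]]. specialize (f1 z hz). rewrite hy in *. auto.
    - intros z z' [_ [_ [y ->]]] [_ [_ [y' ->]]]. simpl. congruence. }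
  assert (hc2 : ~ cofinal_in lt X2 b).
  { apply (Hpart X2 n); auto.
    - intros z [? [? _]]; auto.
    - intros z [hz [_ [y hy]]]. specialize (f1 z hz). rewrite hy in *. auto.
    - intros z z' [_ [_ [y ->]]] [_ [_ [y' ->]]]. simpl. congruence. }
  apply not_all_ex_not in hc1 as [u1 hu1]. apply imply_to_and in hu1 as [u1b hu1].
  apply not_all_ex_not in hc2 as [u2 hu2]. apply imply_to_and in hu2 as [u2b hu2].
  destruct (max_exists u1 u2) as [u [hu1' [hu2' hu3]]].
  assert (hub : lt u b) by (destruct hu3 as [-> | ->]; auto).
  destruct (Hc u hub) as [z [hz1 [hz2 hz3]]].
  destruct (f z) eqn:hf; [apply hu1 | apply hu2]; exists z; split;
    [repeat split; eauto | eauto using le_trans | repeat split; eauto | eauto using le_trans].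
Qed.

(** * Disjoint finite sets [t alpha] *)

Variable t : L -> L -> Prop.
Hypothesis Ht_fin : forall a, finite_set (t a).
Hypothesis Ht_disj : forall a b x, a <> b -> t a x -> t b x -> False.

(* Otherwise, sending [a] to itself when [a <= eta] and to a point of [t a] below [eta]
   otherwise would inject [L] into [eta + eta]. *)
Lemma index_above eta : exists a, lt eta a /\ forall z, t a z -> lt eta z.
Proof.
  apply NNPP; intro hn.
  assert (H : forall a, lt eta a -> exists z, t a z /\ le z eta).
  { intros a ha. apply NNPP; intro h2. apply hn. exists a; split; auto.
    intros z hz. apply not_le_lt. intro h3. apply h2; eauto. }
  destruct (unbounded eta) as [r hr].
  destruct (choice (fun x u => (le x eta -> u = inl x) /\
      (lt eta x -> exists z, u = inr z /\ t x z /\ le z eta))) as [f Hf].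
  { intro x. destruct (lt_total eta x) as [h|h].
    - destruct (H x h) as [z [z1 z2]]. exists (inr z). split; eauto.
      intro h'; exfalso; eapply le_lt_contra; eauto.
    - exists (inl x). split; auto. intro h'. exfalso.
      destruct h as [<-|h]; eauto using lt_asym. }
  assert (Hle : forall x, ~ lt eta x -> f x = inl x).
  { intros x hx. apply Hf, not_lt_le, hx. }
  apply (no_injection_into_double r). exists f. split.
  - intro x. destruct (classic (lt eta x)) as [h|h].
    + destruct (proj2 (Hf x) h) as [z [-> [_ e3]]]. simpl; eauto.
    + rewrite (Hle x h). simpl. apply not_lt_le in h. eauto.
  - intros x y he. destruct (classic (lt eta x)) as [hx|hx], (classic (lt eta y)) as [hy|hy].
    + destruct (proj2 (Hf x) hx) as [z [e1 [e2 _]]].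
      destruct (proj2 (Hf y) hy) as [z' [e1' [e2' _]]].
      rewrite e1, e1' in he. inversion he; subst. apply NNPP; intro hne. eauto.
    + destruct (proj2 (Hf x) hx) as [z [e1 _]]. rewrite (Hle y hy), e1 in he. discriminate.
    + destruct (proj2 (Hf y) hy) as [z [e1 _]]. rewrite (Hle x hx), e1 in he. discriminate.
    + rewrite (Hle x hx), (Hle y hy) in he. inversion he; auto.
Qed.

Lemma finite_bounded (l : list L) : exists b, forall x, In x l -> lt x b.
Proof.
  induction l as [|a l [b hb]].
  - exists mu; intros x [].
  - destruct (max_exists a b) as [z [h1 [h2 _]]]. destruct (unbounded z) as [y hy].
    exists y. intros x [<-|hx]; eauto.
Qed.

Definition t_closed (y : L) : Prop :=
  forall eta, lt eta y -> exists a, lt a y /\ forall z, t a z -> lt eta z /\ lt z y.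

Lemma t_closed_club : club lt t_closed.
Proof.
  split.
  - intro x0.
    assert (Hnext : forall x, exists p : L * L, lt x (fst p) /\ lt (fst p) (snd p) /\
        (forall z, t (fst p) z -> lt x z /\ lt z (snd p))).
    { intro x. destruct (index_above x) as [a [ha1 ha2]]. destruct (Ht_fin a) as [l hl].
      destruct (finite_bounded (a :: l)) as [b hb]. exists (a, b); simpl.
      repeat split; auto; [apply hb; left; auto | apply hb; right; apply hl; auto]. }
    destruct (choice _ Hnext) as [pf Hpf].
    set (xs := fun n => Nat.iter n (fun x => snd (pf x)) x0).
    assert (Hxs : forall n, lt (xs n) (snd (pf (xs n)))).
    { intro n. destruct (Hpf (xs n)) as [? [? _]]; eauto. }
    destruct (omega_seq_bounded xs) as [b0 hb0].
    destruct (sup_exists (fun z => exists n, z = xs n) b0) as [y [hy1 hy2]].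
    { intros z [n ->]; auto. }
    assert (Hxsy : forall n, le (snd (pf (xs n))) y) by (intro n; apply hy1; exists (S n); auto).
    exists y. split.
    + intros eta heta. destruct (hy2 eta heta) as [z [[n ->] hz]].
      destruct (Hpf (xs n)) as [p1 [p2 p3]]. exists (fst (pf (xs n))). split; eauto.
      intros z hz2. destruct (p3 z hz2). split; eauto.
    + apply (lt_le_trans _ (snd (pf x0))); [apply (Hxs 0) | apply (Hxsy 0)].
  - intros a _ hacc eta heta. destruct (hacc eta heta) as [y [hy1 [hy2 hy3]]].
    destruct (hy1 eta hy2) as [al [h1 h2]]. exists al. split; eauto.
    intros z hz. destruct (h2 z hz); split; eauto.
Qed.

(** * Walks towards a point *)

Variable e : nat -> L -> L -> Prop.
Hypothesis He_club : forall m a, club_in lt (e m a) a.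
Hypothesis He_mono : forall m a x, e m a x -> e (S m) a x.

Lemma e_mono m m' a x : e m a x -> m <= m' -> e m' a x.
Proof. intros h hm. induction hm; auto. Qed.

(* [nx m d x] is the next point of the [m]-walk from [x] towards [d], except that the walk
   halts at [x] as soon as [d] is in [e m x]: from there the next step would be [d] itself. *)
Definition toward_step (nx : nat -> L -> L -> L) : Prop :=
  forall m d x,
    (lt d x /\ ~ e m x d -> is_min lt (fun z => e m x z /\ le d z) (nx m d x)) /\
    (~ (lt d x /\ ~ e m x d) -> nx m d x = x).

Lemma toward_step_exists : exists nx, toward_step nx.
Proof.
  destruct (choice (fun (p : nat * L * L) y => let '(m, d, x) := p in
     (lt d x /\ ~ e m x d -> is_min lt (fun z => e m x z /\ le d z) y) /\
     (~ (lt d x /\ ~ e m x d) -> y = x))) as [nf Hnf].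
  { intros [[m d] x]. destruct (classic (lt d x /\ ~ e m x d)) as [[h1 h2]|h].
    - destruct (proj1 (proj2 (He_club m x)) d h1) as [y0 hy0].
      destruct (least_exists (fun z => e m x z /\ le d z)) as [y hy]; eauto.
      exists y; split; auto. tauto.
    - exists x; tauto. }
  exists (fun m d x => nf (m, d, x)). intros m d x. exact (Hnf (m, d, x)).
Qed.

Section Toward.

Variable nx : nat -> L -> L -> L.
Hypothesis Hnx : toward_step nx.
Variable d : L.

Definition walk_toward (m : nat) (xi : L) (n : nat) : L := Nat.iter n (nx m d) xi.

Lemma walk_toward_S m xi n : walk_toward m xi (S n) = nx m d (walk_toward m xi n).
Proof. reflexivity. Qed.

Lemma toward_step_below m x : lt d x -> ~ e m x d ->
  lt d (nx m d x) /\ lt (nx m d x) x /\ e m x (nx m d x).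
Proof.
  intros h1 h2. destruct (proj1 (Hnx m d x) (conj h1 h2)) as [[hz [hdz|hdz]] _].
  - repeat split; auto. apply (proj1 (He_club m x)); auto.
  - rewrite <- hdz in hz. tauto.
Qed.

Lemma walk_toward_above m xi : lt d xi -> forall n, lt d (walk_toward m xi n).
Proof.
  intros h n. induction n as [|n IH]; auto. rewrite walk_toward_S.
  destruct (classic (lt d (walk_toward m xi n) /\ ~ e m (walk_toward m xi n) d)) as [[a b]|hh].
  - apply toward_step_below; auto.
  - rewrite (proj2 (Hnx m d _) hh). auto.
Qed.

Lemma walk_toward_halts m xi n : e m (walk_toward m xi n) d ->
  forall j, n <= j -> walk_toward m xi j = walk_toward m xi n.
Proof.
  intros he j hj. induction hj as [|j hj IH]; auto.
  rewrite walk_toward_S, IH. apply (proj2 (Hnx m d _)). tauto.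
Qed.

(* As [m] grows, [e m x] grows and the step [nx m d x] can only decrease; so it is
   eventually constant. *)
Lemma walk_toward_eventually_constant xi : lt d xi ->
  forall n, exists M g, forall m, M <= m -> walk_toward m xi n = g.
Proof.
  intros hxi n. induction n as [|n [M [g IH]]]; [exists 0, xi; auto|].
  assert (hg : lt d g) by (rewrite <- (IH M (le_n _)); apply walk_toward_above; auto).
  destruct (classic (exists m0, M <= m0 /\ e m0 g d)) as [[m0 [hm0 he0]]|hno].
  - exists (max M m0), g. intros m hm. rewrite walk_toward_S, IH by lia.
    apply (proj2 (Hnx m d g)). intros [_ hn]. apply hn. apply (e_mono m0); auto; lia.
  - destruct (least_exists (fun v => exists m, M <= m /\ nx m d g = v))
      as [v0 [[m1 [hm1 hv0]] hmin]].
    { exists (nx M d g), M; auto. }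
    exists m1, v0. intros m hm. rewrite walk_toward_S, IH by lia.
    assert (hnm : ~ e m g d) by (intro; apply hno; exists m; split; auto; lia).
    assert (hnm1 : ~ e m1 g d) by (intro; apply hno; exists m1; split; auto).
    apply le_antisym.
    + destruct (proj1 (Hnx m1 d g) (conj hg hnm1)) as [[a b] _].
      rewrite <- hv0. apply (proj1 (Hnx m d g) (conj hg hnm)). split; auto. apply (e_mono m1); auto.
    + apply hmin. exists m; split; auto; lia.
Qed.

(* The eventual values strictly decrease until the walk halts, so it must halt. *)
Lemma walk_toward_stabilizes xi : lt d xi ->
  exists M x, forall m, M <= m -> exists n, walk_toward m xi n = x /\ e m x d.
Proof.
  intro hxi.
  destruct (choice _ (walk_toward_eventually_constant xi hxi)) as [Mf HMf].
  destruct (choice _ HMf) as [v Hv].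
  pose (Mn := fun n => max (Mf n) (Mf (S n))).
  assert (HMn1 : forall n, Mf n <= Mn n) by (intro n; unfold Mn; lia).
  assert (HMn2 : forall n, Mf (S n) <= Mn n) by (intro n; unfold Mn; lia).
  assert (Hstep : forall n, nx (Mn n) d (v n) = v (S n)).
  { intro n. rewrite <- (Hv n (Mn n) (HMn1 n)), <- walk_toward_S. apply Hv, HMn2. }
  assert (HN : exists N, v (S N) = v N).
  { apply NNPP; intro hn.
    assert (Hdec : forall n, lt (v (S n)) (v n)).
    { intro n. rewrite <- Hstep.
      assert (hvd : lt d (v n)).
      { rewrite <- (Hv n (Mn n) (HMn1 n)). apply walk_toward_above; auto. }
      destruct (classic (e (Mn n) (v n) d)) as [he|he].
      - exfalso. apply hn. exists n. rewrite <- Hstep. apply (proj2 (Hnx _ d _)). tauto.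
      - apply toward_step_below; auto. }
    destruct (least_exists (fun y => exists n, y = v n)) as [y [[n ->] hy]].
    { exists (v 0), 0; auto. }
    exact (le_lt_contra _ _ (hy _ (ex_intro _ (S n) eq_refl)) (Hdec n)). }
  destruct HN as [N hN]. exists (Mn N), (v N). intros m hm. exists N.
  pose proof (HMn1 N). pose proof (HMn2 N).
  assert (e1 : walk_toward m xi N = v N) by (apply Hv; lia).
  assert (e2 : walk_toward m xi (S N) = v (S N)) by (apply Hv; lia).
  split; auto. rewrite walk_toward_S, e1 in e2. apply NNPP; intro hne.
  assert (hg : lt d (v N)) by (rewrite <- e1; apply walk_toward_above; auto).
  destruct (toward_step_below m _ hg hne) as [_ [h _]]. rewrite e2, hN in h. exact (lt_irrefl _ h).
Qed.

(* Below [d] only the points of [e] above [b] could divert the walk to [zeta] from the walk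
   towards [d]; so the two walks agree until the latter halts at [xx], whose next step
   towards [zeta] is [x]. *)
Lemma walk_passes_through m xi zeta x xx b s :
  lt d xi -> lt b zeta -> lt s zeta -> lt zeta x -> lt x d ->
  (forall n, ~ e m (walk_toward m xi n) d ->
     empty_between (e m (walk_toward m xi n)) b d) ->
  (exists n, walk_toward m xi n = xx /\ e m xx d) ->
  e m xx x -> empty_between (e m xx) s x ->
  exists k, walkpt lt (e m) zeta xi k x.
Proof.
  intros hxi hbz hsz hzx hxd Hgap [n [hn1 hn2]] hxx Hxx.
  destruct (least_nat (fun j => e m (walk_toward m xi j) d) n) as [n0 [h0 [hn0 hbefore]]].
  { rewrite hn1; auto. }
  assert (hxx0 : walk_toward m xi n0 = xx).
  { rewrite <- hn1. symmetry. apply walk_toward_halts; auto. }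
  assert (W : forall j, j <= n0 -> walkpt lt (e m) zeta xi j (walk_toward m xi j)).
  { induction j as [|j IH]; intro hj; [constructor|].
    assert (hnj : ~ e m (walk_toward m xi j) d) by (apply hbefore; lia).
    assert (hgj : lt d (walk_toward m xi j)) by (apply walk_toward_above; auto).
    apply wpS with (x := walk_toward m xi j); [apply IH; lia | eauto |].
    destruct (proj1 (Hnx m d _) (conj hgj hnj)) as [[a b'] hmin].
    split; [split; eauto|].
    intros z [hz1 hz2]. destruct (classic (le d z)) as [hdz|hdz]; [apply hmin; auto|].
    exfalso. apply not_le_lt in hdz. apply (Hgap j hnj z hz1); eauto. }
  exists (S n0). apply wpS with (x := walk_toward m xi n0).
  - apply W; auto.
  - apply (lt_trans _ d); eauto. apply walk_toward_above; auto.
  - rewrite hxx0. split; [split; auto|].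
    intros z [hz1 hz2]. destruct (classic (le x z)) as [h|h]; auto.
    exfalso. apply not_le_lt in h. apply (Hxx z hz1); eauto.
Qed.

End Toward.

(** * The ideal [id_p(C, I)] *)

Lemma incr_club_limit_acc (c : L -> L) k d j x :
  strict_incr_below lt c k -> club_in lt (ran_below lt c k) d -> lt j k -> is_limit lt j ->
  (forall i, lt i j -> lt (c i) x) -> le x (c j) -> acc_in lt (ran_below lt c k) x.
Proof.
  intros hinc [hr1 [_ hr3]] hjk [[i0 hi0] hl] hbelow hxj.
  assert (hran : forall i, lt i k -> ran_below lt c k (c i)) by (intros i hi; exists i; auto).
  destruct (sup_exists (fun y => exists i, lt i j /\ y = c i) (c j)) as [s [hs1 hs2]].
  { intros y [i [hi ->]]. left. apply hinc; auto. }
  assert (hup : forall i, lt i j -> exists i', lt i' j /\ lt (c i) (c i') /\ le (c i') s).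
  { intros i hi. destruct (hl i hi) as [i' [hi1 hi2]].
    exists i'. repeat split; auto; [apply hinc; eauto | apply hs1; eauto]. }
  assert (hs : ran_below lt c k s).
  { apply hr3.
    - apply (le_lt_trans _ (c j)); [|apply hr1, hran; auto].
      apply not_lt_le. intro h. destruct (hs2 _ h) as [y [[i [hi ->]] hy]].
      apply (lt_asym (c j) (c i)); [exact hy | apply hinc; eauto].
    - destruct (hup i0 hi0) as [i' [_ [h1 h2]]]. exists (c i0). split; eauto.
    - intros u hu. destruct (hs2 u hu) as [y [[i [hi ->]] hui]].
      destruct (hup i hi) as [i' [hi' [h1 h2]]]. exists (c i). repeat split; eauto. }
  destruct hs as [j' [hj'k <-]].
  assert (hjj : le j j').
  { apply not_lt_le. intro h. destruct (hup j' h) as [i' [_ [h1 h2]]].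
    exact (le_lt_contra _ _ h2 h1). }
  assert (hcj : le (c j) (c j')) by (destruct hjj as [h| ->]; auto; left; apply hinc; auto).
  intros u hu. destruct (hs2 u (lt_le_trans _ _ _ hu (le_trans _ _ _ hxj hcj)))
    as [y [[i [hi ->]] hui]].
  exists (c i). repeat split; eauto.
Qed.

(* The least [j] with [x <= c j] is neither [0] nor a limit, so [j = g + n + 1] and [x]
   lies in [I(g, n)]. *)
Lemma nacc_in_interval (c : L -> L) k (A : L -> Prop) d x z0 :
  strict_incr_below lt c k -> club_in lt (ran_below lt c k) d ->
  (forall y, ran_below lt c k y -> A y) -> (forall z, le z0 z) ->
  A x -> lt x d -> ~ acc_in lt A x -> lt (c z0) x ->
  exists g n, index_base lt k g /\ interval lt c g n x.
Proof.
  intros hinc hclub hA hz0 hAx hxd hnacc hcx.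
  destruct (least_exists (fun j => lt j k /\ le x (c j))) as [j [[hjk hxj] hjmin]].
  { destruct (proj1 (proj2 hclub) x hxd) as [y [[i [hi <-]] hy]]. eauto. }
  assert (hbelow : forall i, lt i j -> lt (c i) x).
  { intros i hi. apply not_le_lt. intro h.
    exact (le_lt_contra _ _ (hjmin i (conj (lt_trans _ _ _ hi hjk) h)) hi). }
  destruct (classic (zero_or_limit j)) as [[hz|hl]|hnb].
  - exfalso. destruct (hz0 j) as [h| <-]; [exact (hz z0 h) | exact (le_lt_contra _ _ hxj hcx)].
  - exfalso. apply hnacc. intros u hu.
    destruct (incr_club_limit_acc c k d j x hinc hclub hjk hl hbelow hxj u hu) as [y [hy1 hy2]].
    exists y. auto.
  - destruct (not_zero_or_limit_immsucc _ hnb) as [j' hj'].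
    destruct (plus_nat_decompose j') as [g [n [hb hp]]].
    exists g, n. split.
    + split; auto. apply (le_lt_trans _ j'); [eapply plus_nat_ge; eauto|].
      apply (lt_trans _ j); auto. apply hj'.
    + exists j', j. repeat split; auto; [econstructor; eauto | apply hbelow, hj'].
Qed.

Variable cf : L -> L.
Hypothesis Hcf : forall a, cof lt a (cf a).
Variable mus : nat -> L.
Hypothesis Hmus_reg : forall i, regular lt (mus i).
Hypothesis Hmus_inc : forall i, lt (mus i) (mus (S i)).
Hypothesis Hmus_lt : forall i, lt (mus i) mu.
Hypothesis Hmus_cof : forall x, lt x mu -> exists i, lt x (mus i).
Hypothesis Hmus0 : lt sigma (mus 0).
Variable mup : nat -> L.
Hypothesis Hmup : forall m, succ_card lt (mus m) (mup m).

Lemma mus_le i j : i <= j -> le (mus i) (mus j).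
Proof. apply increasing_seq_le, Hmus_inc. Qed.

Lemma mus_lt_mup m : lt (mus m) (mup m).
Proof.
  apply not_le_lt. intro h. apply (proj1 (Hmup m)). exists (fun x => x). split; [|auto].
  intros x hx. exact (lt_le_trans _ _ _ hx h).
Qed.

Lemma mup_le_mus m : le (mup m) (mus (S m)).
Proof.
  apply not_lt_le. intro h. apply (proj1 (Hmus_reg (S m)) (mus m) (Hmus_inc m)).
  apply (proj2 (Hmup m)); auto.
Qed.

Hypothesis He_card : forall m a, le_card_sum lt (e m a) (cf a) (mup m).
Variable c0 : L -> L -> L.
Variable C : L -> L -> Prop.
Hypothesis Hc0 : forall d, SS d ->
  strict_incr_below lt (c0 d) sigma /\ club_in lt (ran_below lt (c0 d) sigma) d.
Hypothesis HC_club : forall d, SS d -> club_in lt (C d) d.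
Hypothesis HC_ran : forall d x, SS d -> ran_below lt (c0 d) sigma x -> C d x.
Hypothesis HC_cf : forall d g m x, SS d -> index_base lt sigma g ->
  nacc_in lt (C d) x -> interval lt (c0 d) g m x -> lt (mup m) (cf x).
Hypothesis He_coh : forall m a d x, SS d -> e m a d ->
  Cm lt (c0 d) sigma (C d) m x -> e m a x.

Definition passes_through (bs : L) : Prop :=
  exists a b m, lt a b /\ forall z xi, t a z -> t b xi ->
    lt z xi /\ exists k, walkpt lt (e m) z xi k bs.

Section AtPoint.

Variable nx : nat -> L -> L -> L.
Hypothesis Hnx : toward_step nx.
Variable d : L.
Hypothesis hd : SS d.
Variable beta : L.
Hypothesis Hbeta : forall xi, t beta xi -> lt d xi.
Variable lb : list L.
Hypothesis Hlb : forall xi, t beta xi <-> In xi lb.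

Lemma lb_above xi : In xi lb -> lt d xi.
Proof. intros h. apply Hbeta, Hlb, h. Qed.

Definition halts_by (M : nat) : Prop :=
  forall xi, In xi lb -> exists xx, lt (cf xx) (mus M) /\
    forall m, M <= m -> exists n, walk_toward nx d m xi n = xx /\ e m xx d.

Definition gaps_above (b : L) : Prop :=
  forall xi, In xi lb -> forall m n, ~ e m (walk_toward nx d m xi n) d ->
    empty_between (e m (walk_toward nx d m xi n)) b d.

Lemma halting_uniform : exists M, halts_by M.
Proof.
  apply eventually_forall_list.
  - intros xi N N' [xx [h1 h2]] hN. exists xx. split.
    + apply (lt_le_trans _ _ _ h1), mus_le; auto.
    + intros m hm; apply h2; lia.
  - intros xi hxi. destruct (walk_toward_stabilizes nx Hnx d xi (lb_above xi hxi)) as [M [xx hM]].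
    destruct (Hmus_cof _ (cof_lt_mu xx (cf xx) (Hcf xx) omega_lt_mu)) as [i hi].
    exists (max M i), xx. split.
    + apply (lt_le_trans _ _ _ hi), mus_le; lia.
    + intros m hm; apply hM; lia.
Qed.

(* Countably many gaps below [d] for each of the finitely many [xi]: as [cf d > omega]
   they have a common bound. *)
Lemma gap_uniform : exists b, lt b d /\ gaps_above b.
Proof.
  pose proof (stationary_limit d hd) as hdl.
  destruct (proj1 hdl) as [s0 hs0].
  assert (Hone : forall xi, exists b, In xi lb -> lt b d /\ forall m n,
      ~ e m (walk_toward nx d m xi n) d ->
      empty_between (e m (walk_toward nx d m xi n)) b d).
  { intro xi. destruct (classic (In xi lb)) as [hxi|hxi]; [|exists s0; tauto].
    destruct (choice (fun (p : nat * nat) s => lt s d /\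
        (~ e (fst p) (walk_toward nx d (fst p) xi (snd p)) d ->
         empty_between (e (fst p) (walk_toward nx d (fst p) xi (snd p))) s d)))
      as [sf Hsf].
    { intros [m n]; simpl. destruct (classic (e m (walk_toward nx d m xi n) d)) as [he|hne].
      - exists s0; tauto.
      - destruct (club_gap _ _ _ (He_club m _) hdl
          (walk_toward_above nx Hnx d m xi (lb_above xi hxi) n) hne) as [s hs].
        exists s; tauto. }
    destruct (countable2_bounded_below d sigma (fun m n => sf (m, n)) (HS_cf d hd) Hsig_w
        (fun m n => proj1 (Hsf (m, n)))) as [b [hb1 hb2]].
    exists b. intros _. split; auto. intros m n hne z hz hbz hzd.
    apply (proj2 (Hsf (m, n)) hne z hz); eauto. }
  destruct (choice _ Hone) as [bf Hbf].
  destruct (bound_below_limit d (map bf lb) hdl) as [b [hb1 hb2]].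
  { intros y hy. apply in_map_iff in hy as [xi [<- hxi]]. apply (Hbf xi hxi). }
  exists b. split; auto. intros xi hxi m n hne z hz hbz hzd.
  apply (proj2 (Hbf xi hxi) m n hne z hz); auto.
  apply (lt_trans _ b); auto. apply hb2, in_map, hxi.
Qed.

(* [a] is taken from the tail of [x] given by [t_closed x], above [b] and above a gap of
   each [e m xx] below [x]. *)
Lemma walks_pass_through_point m x b :
  lt b x -> lt x d -> le w (cf x) -> lt (mup m) (cf x) ->
  Cm lt (c0 d) sigma (C d) m x -> t_closed x -> gaps_above b ->
  (forall xi, In xi lb -> exists xx,
     (exists n, walk_toward nx d m xi n = xx /\ e m xx d) /\ lt (cf xx) (cf x)) ->
  exists a, lt a x /\ forall z xi, t a z -> In xi lb ->
    lt z xi /\ exists k, walkpt lt (e m) z xi k x.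
Proof.
  intros hbx hxd hwx hmx hCm hcl Hgap Htarget.
  pose proof (cof_ge_omega_limit x (cf x) (Hcf x) hwx) as hxl.
  assert (Hs : forall xi, exists s, In xi lb -> lt s x /\ exists xx,
      (exists n, walk_toward nx d m xi n = xx /\ e m xx d) /\
      empty_between (e m xx) s x).
  { intro xi. destruct (classic (In xi lb)) as [hin|hin]; [|exists x; tauto].
    destruct (Htarget xi hin) as [xx [hxx hcf]].
    destruct (small_set_gap _ _ _ _ _ (He_card m xx) (Hcf x) hcf hmx) as [s [hs1 hs2]].
    exists s. intros _. split; eauto. }
  destruct (choice _ Hs) as [sf Hsf].
  destruct (bound_below_limit x (b :: map sf lb) hxl) as [eta [heta1 heta2]].
  { intros y [<-|hy]; auto. apply in_map_iff in hy as [xi [<- hxi]]. apply (Hsf xi hxi). }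
  destruct (hcl eta heta1) as [a [ha1 ha2]].
  exists a. split; auto. intros z xi hz hxi.
  destruct (ha2 z hz) as [hz1 hz2].
  destruct (Hsf xi hxi) as [_ [xx [[n [hn1 hn2]] hgap]]].
  split; [apply (lt_trans _ x); eauto using lb_above|].
  apply (walk_passes_through nx Hnx d m xi z x xx b (sf xi)); eauto using lb_above.
  - apply (lt_trans _ eta); auto. apply heta2; left; auto.
  - apply (lt_trans _ eta); auto. apply heta2; right; apply in_map; auto.
Qed.

Lemma large_nacc_passes_through M b z0 x :
  halts_by M -> gaps_above b -> (forall z, le z0 z) -> lt d beta ->
  C d x -> ~ acc_in lt (C d) x -> t_closed x ->
  le (mus (S (S M))) (cf x) -> lt b x -> lt (c0 d z0) x ->
  passes_through x.
Proof.
  intros HM Hgap hz0 hbeta hCx hnacc hcl hMx hbx hcx.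
  destruct (Hc0 d hd) as [hinc hclub].
  assert (hxd : lt x d) by (apply (HC_club d hd); auto).
  destruct (nacc_in_interval (c0 d) sigma (C d) d x z0 hinc hclub (fun y => HC_ran d y hd) hz0
      hCx hxd hnacc hcx) as [g [n [hg hint]]].
  assert (hnx : lt (mup n) (cf x)) by (apply (HC_cf d g n x); auto; split; auto).
  set (m := max n M).
  assert (hmx : lt (mup m) (cf x)).
  { destruct (Nat.le_ge_cases M n) as [h|h].
    - unfold m. rewrite Nat.max_l by lia. auto.
    - unfold m. rewrite Nat.max_r by lia.
      apply (le_lt_trans _ (mus (S M))); [apply mup_le_mus|].
      apply (lt_le_trans _ _ _ (Hmus_inc _) hMx). }
  assert (hwx : le w (cf x)).
  { apply lt_le_incl, (lt_trans _ sigma); auto. apply (lt_trans _ (mus 0)); auto.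
    apply (le_lt_trans _ (mus n)); [apply mus_le; lia|].
    apply (lt_trans _ (mup n)); auto. apply mus_lt_mup. }
  assert (hCm : Cm lt (c0 d) sigma (C d) m x).
  { right. split; auto. exists g, n. split; [exact hg | split; [unfold m; lia | exact hint]]. }
  destruct (walks_pass_through_point m x b) as [a [hax ha]]; auto.
  - intros xi hxi. destruct (HM xi hxi) as [xx [hxx1 hxx2]]. exists xx. split.
    + apply hxx2. unfold m; lia.
    + apply (lt_le_trans _ _ _ hxx1). apply lt_le_incl, (le_lt_trans _ (mus m)).
      * apply mus_le; unfold m; lia.
      * apply (lt_trans _ (mup m)); auto. apply mus_lt_mup.
  - exists a, beta, m. split; [apply (lt_trans _ x); eauto|].
    intros z xi hz hxi. apply ha; auto. apply Hlb; auto.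
Qed.

End AtPoint.

Lemma failures_in_I d : SS d ->
  in_I lt mu (C d) cf d (fun x => ~ passes_through x /\ t_closed x /\ C d x).
Proof.
  intros hd. destruct toward_step_exists as [nx Hnx].
  destruct (index_above d) as [beta [hbeta Hbeta]]. destruct (Ht_fin beta) as [lb Hlb].
  destruct (halting_uniform nx Hnx d beta Hbeta lb Hlb) as [M HM].
  destruct (gap_uniform nx Hnx d hd beta Hbeta lb Hlb) as [b [hbd Hgap]].
  destruct (least_exists (fun _ => True)) as [z0 [_ hz0]]; [exists d; auto|].
  assert (hcd : lt (c0 d z0) d).
  { apply (Hc0 d hd). exists z0. split; auto. apply (le_lt_trans _ w); auto. }
  destruct (max_exists b (c0 d z0)) as [u [hu1 [hu2 hu3]]].
  assert (hud : lt u d) by (destruct hu3 as [-> | ->]; auto).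
  destruct (proj2 (stationary_limit d hd) u hud) as [b' [hub' hb'd]].
  split; [intros x [_ [_ h]]; exact h|].
  exists ((mus (S (S M)), b') :: nil). split; [repeat constructor; simpl; auto|].
  intros x [hA [hcl hCx]]. exists (mus (S (S M)), b'). split; [left; auto|]. split; auto. simpl.
  destruct (classic (acc_in lt (C d) x)) as [hacc|hnacc]; auto.
  destruct (classic (lt (cf x) (mus (S (S M))))) as [hcf|hcf]; auto.
  destruct (classic (lt x b')) as [hxb|hxb]; auto.
  exfalso. apply hA, (large_nacc_passes_through nx Hnx d hd beta Hbeta lb Hlb M b z0 x); auto;
    apply not_lt_le in hcf, hxb; eauto.
Qed.

End Walks.

Theorem theorem6p1
  (L : Type) (lt : L -> L -> Prop) (Hwo : wellorder lt)
  (cf : L -> L) (Hcf : forall a, cof lt a (cf a))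
  (w : L) (Hw : is_omega lt w)
  (mu : L) (Hmu_card : is_card lt mu) (Hmu_cf : cof lt mu w)
  (Hlam1 : forall a, le_card (seg lt a) (seg lt mu))
  (Hlam2 : ~ le_card (fun _ => True) (seg lt mu))
  (sigma : L) (Hsig_reg : regular lt sigma) (Hsig_w : lt w sigma)
  (Hsig_mu : lt sigma mu)
  (SS : L -> Prop) (HS_stat : stationary lt SS)
  (HS_cf : forall d, SS d -> cof lt d sigma)
  (mus : nat -> L) (Hmus_reg : forall i, regular lt (mus i))
  (Hmus_inc : forall i, lt (mus i) (mus (S i)))
  (Hmus_lt : forall i, lt (mus i) mu)
  (Hmus_cof : forall x, lt x mu -> exists i, lt x (mus i))
  (Hmus0 : lt sigma (mus 0))
  (mup : nat -> L) (Hmup : forall m, succ_card lt (mus m) (mup m))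
  (c0 : L -> L -> L)
  (Hc0 : forall d, SS d ->
     strict_incr_below lt (c0 d) sigma /\ club_in lt (ran_below lt (c0 d) sigma) d)
  (Hc0_guess : forall E, club lt E ->
     stationary lt (fun d => SS d /\ forall x, ran_below lt (c0 d) sigma x -> E x))
  (C : L -> L -> Prop)
  (HC_club : forall d, SS d -> club_in lt (C d) d)
  (HC_ran : forall d x, SS d -> ran_below lt (c0 d) sigma x -> C d x)
  (HC_card : forall d g m, SS d -> index_base lt sigma g ->
     le_card (fun x => C d x /\ interval lt (c0 d) g m x) (seg lt (mup m)))
  (HC_cf : forall d g m x, SS d -> index_base lt sigma g ->
     nacc_in lt (C d) x -> interval lt (c0 d) g m x -> lt (mup m) (cf x))
  (HC_guess : forall E, club lt E ->
     stationary lt (fun d => SS d /\ forall g m, index_base lt sigma g ->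
       exists x, E x /\ nacc_in lt (C d) x /\ interval lt (c0 d) g m x))
  (e : nat -> L -> L -> Prop)
  (He_club : forall m a, club_in lt (e m a) a)
  (He_mono : forall m a x, e m a x -> e (S m) a x)
  (He_card : forall m a, le_card_sum lt (e m a) (cf a) (mup m))
  (He_coh : forall m a d x, SS d -> e m a d ->
     Cm lt (c0 d) sigma (C d) m x -> e m a x)
  (t : L -> L -> Prop) (Ht_fin : forall a, finite_set (t a))
  (Ht_disj : forall a b x, a <> b -> t a x -> t b x -> False) :
  in_idp lt SS mu C cf
    (fun bs => ~ exists a b m, lt a b /\
        forall z xi, t a z -> t b xi ->
          lt z xi /\ exists k, walkpt lt (e m) z xi k bs).
Proof.
  exists (t_closed L lt t). split.
  - eapply t_closed_club; eauto.
  - intros d hd _. eapply failures_in_I; eauto.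
Qed.
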